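(* Let $k \geqslant 2$, $\ell \geqslant 0$, and let $A$ and $N$ be as defined in the context. Then $A$ accepts the string $a_1 a_2 \cdots a_{N-1}$.
   Context: A 2DFA $(\Sigma, Q, q_0, \delta, F)$: $\Sigma$ is a finite alphabet not containing end-markers $\vdash, \dashv$; $Q$ finite set of states; $q_0 \in Q$ initial; $\delta: Q \times (\Sigma \cup \{\vdash,\dashv\}) \to Q \times \{-1,+1\}$ partial; $F \subseteq Q$ accepting. On input $w = b_1\cdots b_m$ it works on tape $\vdash b_1 \cdots b_m \dashv$, starting at $\vdash$ in $q_0$; if $\delta(q,c)=(r,d)$ it enters $r$ and moves one cell in direction $d$; if undefined it rejects; it accepts if it ever arrives at $\dashv$ in a state of $F$; it may loop. Construction of $A$. Fix $k \geqslant 2$, $\ell \geqslant 0$, $Q^+ = \{1, \ldots, k\}$, $Q^- = \{1', \ldots, \ell'\}$, ordered by $i < j$ and $i' < j'$ iff $i < j$. A pair is $(P,R)$ with $P \subseteq Q^-$, $R \subseteq Q^+$, $|R| = |P|+1$. Writing $P = \{p_1 < \cdots < p_m\}$ and $R = \{r_1 < \cdots < r_{m+1}\}$, the sequence of the pair is the integer sequence $(r_1, -p_1, r_2, -p_2, \ldots, r_m, -p_m, r_{m+1})$, where a primed state $i'$ contributes the integer $i$ (so $-p_j$ for $p_j = i'$ is the integer $-i$). Pairs are ordered by the lexicographic order of their sequences (a proper prefix is smaller). Let $N = \binom{k+\ell}{\ell+1}$ be the number of pairs and enumerate them increasingly as $(P^{(1)},R^{(1)}) < \cdots < (P^{(N)},R^{(N)})$,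 with $P^{(i)} = \{p^{(i)}_1 < \cdots < p^{(i)}_{m_i}\}$ and $R^{(i)} = \{r^{(i)}_1 < \cdots < r^{(i)}_{m_i+1}\}$; in particular $(P^{(1)},R^{(1)}) = (\emptyset,\{1\})$ and $(P^{(N)},R^{(N)}) = (\emptyset,\{k\})$. The 2DFA $A$ has alphabet $\Sigma = \{a_1, \ldots, a_{N-1}\}$ (distinct symbols), states $Q = Q^+ \cup Q^-$, initial state $q_0 = 1$, accepting states $F = \{k\}$, and exactly the following transitions: $\delta(1, \vdash) = (r^{(1)}_1, +1)$; and for each $i \in \{1,\ldots,N-1\}$: $\delta(r^{(i)}_j, a_i) = (p^{(i)}_j, -1)$ for $j = 1, \ldots, m_i$; $\delta(r^{(i)}_{m_i+1}, a_i) = (r^{(i+1)}_1, +1)$; $\delta(p^{(i+1)}_j, a_i) = (r^{(i+1)}_{j+1}, +1)$ for $j = 1, \ldots, m_{i+1}$. No transitions are defined at $\dashv$. *)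

From mathcomp Require Import all_boot all_order all_algebra.
Set Implicit Arguments. Unset Strict Implicit. Unset Printing Implicit Defensive.
Import GRing.Theory Num.Theory.
Local Open Scope ring_scope.

Inductive tsym (S : Type) := LEnd | REnd | Sym of S.
Arguments LEnd {S}. Arguments REnd {S}.

(** A 2DFA over state type [Q] and letters [S]; the direction [true] is +1,
    [false] is -1; [delta] is partial (None = undefined). *)
Record twoDFA (Q S : Type) := Mk2DFA {
  q_init : Q;
  delta : Q -> tsym S -> option (Q * bool);
  final : Q -> bool }.

(** Configurations: (state, head position) on the tape
    |- b_1 ... b_m -|, positions 0 .. m+1. *)
Definition tape_at (S : Type) (w : seq S) (pos : nat) : option (tsym S) :=
  if pos == 0%N then Some LEnd
  else if pos == (size w).+1 then Some REnd
  else if (pos <= size w)%N then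
    (if drop pos.-1 w is b :: _ then Some (Sym b) else None)
  else None.

Definition step (Q S : Type) (M : twoDFA Q S) (w : seq S) (c : Q * nat)
  : option (Q * nat) :=
  let: (q, pos) := c in
  match tape_at w pos with
  | None => None
  | Some a =>
    match delta M q a with
    | None => None
    | Some (r, d) =>
        if d then Some (r, pos.+1)
        else if pos is p.+1 then Some (r, p) else None
    end
  end.

Fixpoint run (Q S : Type) (M : twoDFA Q S) (w : seq S) (n : nat)
  : option (Q * nat) :=
  match n with
  | 0%N => Some (q_init M, 0%N)
  | n'.+1 => if run M w n' is Some c then step M w c else None
  end.

Definition accepts (Q S : Type) (M : twoDFA Q S) (w : seq S) : Prop :=
  exists n q, run M w n = Some (q, (size w).+1) /\ final M q.

(** Subsets of a duplicate-free list, each listed in the order of the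
    original list (so subsets of [iota 1 n] are increasing lists). *)
Fixpoint subsets (s : seq nat) : seq (seq nat) :=
  if s is x :: s' then
    let r := subsets s' in [seq x :: t | t <- r] ++ r
  else [:: [::]].

(** The integer sequence (r_1, -p_1, r_2, ..., -p_m, r_{m+1}) of a pair,
    given P and R as increasing lists. *)
Fixpoint interleave (R P : seq nat) : seq int :=
  if R is r :: R' then
    (r%:Z) :: (if P is p :: P' then - (p%:Z) :: interleave R' P' else [::])
  else [::].

Definition pair_seq (pr : seq nat * seq nat) : seq int :=
  interleave pr.2 pr.1.

Fixpoint lexle (s t : seq int) : bool :=
  match s, t with
  | [::], _ => true
  | _ :: _, [::] => false
  | x :: s', y :: t' => (x < y) || ((x == y) && lexle s' t')
  end.

(** All pairs (P, R): P ⊆ Q^- = {1',...,l'} (primed state i' encoded by i),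
    R ⊆ Q^+ = {1,...,k}, |R| = |P| + 1. *)
Definition all_pairs (k l : nat) : seq (seq nat * seq nat) :=
  [seq pr <- [seq (P, R) | P <- subsets (iota 1 l), R <- subsets (iota 1 k)]
   | size pr.2 == (size pr.1).+1].

Definition sorted_pairs (k l : nat) : seq (seq nat * seq nat) :=
  sort (fun a b => lexle (pair_seq a) (pair_seq b)) (all_pairs k l).

Definition Npairs (k l : nat) : nat := size (sorted_pairs k l).

(** (P^(i), R^(i)), 1-indexed. *)
Definition pairP (k l i : nat) : seq nat := (nth ([::], [::]) (sorted_pairs k l) i.-1).1.
Definition pairR (k l i : nat) : seq nat := (nth ([::], [::]) (sorted_pairs k l) i.-1).2.

(** States: (true, i) is i ∈ Q^+, (false, i) is i' ∈ Q^-.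
    Letters: the natural number i stands for a_i (1 <= i <= N-1). *)
Definition stateA := (bool * nat)%type.

Definition deltaA (k l : nat) (q : stateA) (c : tsym nat) : option (stateA * bool) :=
  match c with
  | LEnd => if q == (true, 1%N) then Some ((true, nth 0%N (pairR k l 1) 0), true)
            else None
  | REnd => None
  | Sym i =>
    if (1 <= i <= (Npairs k l).-1)%N then
      let P := pairP k l i in let R := pairR k l i in
      let P' := pairP k l i.+1 in let R' := pairR k l i.+1 in
      match q with
      | (true, r) =>
          if r \in R then
            let j := index r R in
            if (j < size P)%N then Some ((false, nth 0%N P j), false)
            else Some ((true, nth 0%N R' 0), true)
          else None
      | (false, p) =>
          if p \in P' then Some ((true, nth 0%N R' (index p P').+1), true)
          else None
      end
    else None
  end.

Definition A (k l : nat) : twoDFA stateA nat :=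
  {| q_init := (true, 1%N);
     delta := deltaA k l;
     final := fun q => q == (true, k) |}.

From mathcomp Require Import all_boot all_order all_algebra.
From mathcomp Require Import zify.
Import Order.TTheory.

Set Implicit Arguments.
Unset Strict Implicit.
Unset Printing Implicit Defensive.

(* On input a_1 ... a_{N-1} the automaton reaches r^(i)_1 on a_i for every i:
   on a_i it bounces r^(i)_j -> p^(i)_j (moving left onto a_{i-1}) ->
   r^(i)_{j+1} until it reaches r^(i)_{m_i+1}, which moves right to r^(i+1)_1.
   The bounce back from a_{i-1} never falls off the tape because the least
   pair is (empty, {1}), so every pair with a nonempty P has index i >= 2.
   Since the greatest pair is (empty, {k}), the run reaches the right
   end-marker in state k. *)

Lemma lexle_refl : reflexive lexle.
Proof. by elim=> //= x s ->; rewrite eqxx orbT. Qed.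

Lemma lexle_total : total lexle.
Proof.
elim=> [|x s IH] [|y t] //=.
by case: (ltgtP x y) => //= ->; rewrite eqxx /= IH.
Qed.

Lemma lexle_trans : transitive lexle.
Proof.
move=> t s; elim: s t => [|x s IH] [|y t] [|z u] //=.
case/orP=> [lt1|/andP[/eqP e1 l1]]; case/orP=> [lt2|/andP[/eqP e2 l2]].
- by rewrite (lt_trans lt1 lt2).
- by rewrite -e2 lt1.
- by rewrite e1 lt2.
- by rewrite e1 e2 eqxx (IH _ _ l1 l2) orbT.
Qed.

Lemma sorted_nth0_le (T : eqType) (leT : rel T) x0 s x :
  transitive leT -> reflexive leT -> sorted leT s -> x \in s ->
  leT (nth x0 s 0) x.
Proof.
move=> tr rf so xs; have s_gt0 : 0 < size s by case: s so xs.
rewrite -(nth_index x0 xs); apply: (sorted_leq_nth tr rf) => //.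
by rewrite inE index_mem.
Qed.

Lemma sorted_le_nth_last (T : eqType) (leT : rel T) x0 s x :
  transitive leT -> reflexive leT -> sorted leT s -> x \in s ->
  leT x (nth x0 s (size s).-1).
Proof.
move=> tr rf so xs; have s_gt0 : 0 < size s by case: s so xs.
rewrite -(nth_index x0 xs); apply: (sorted_leq_nth tr rf) => //.
- by rewrite inE index_mem.
- by rewrite inE prednK.
- by rewrite -ltnS prednK // index_mem.
Qed.

Definition pair_le (a b : seq nat * seq nat) := lexle (pair_seq a) (pair_seq b).

Lemma subseq_of_subsets s t : t \in subsets s -> subseq t s.
Proof.
elim: s t => [|x s IH] t /=; first by rewrite inE => /eqP ->.
rewrite mem_cat => /orP[/mapP[u /IH su ->]|/IH su] /=; first by rewrite eqxx.
exact: subseq_trans su (subseq_cons s x).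
Qed.

Lemma nil_in_subsets s : [::] \in subsets s.
Proof. by elim: s => [|x s IH] //=; rewrite mem_cat IH orbT. Qed.

Lemma seq1_in_subsets s x : x \in s -> [:: x] \in subsets s.
Proof.
elim: s => [|y s IH] //=; rewrite inE mem_cat => /orP[/eqP ->|/IH ->].
  by rewrite map_f ?nil_in_subsets.
by rewrite orbT.
Qed.

Definition pair_wf (k : nat) (P R : seq nat) : bool :=
  [&& uniq P, uniq R, size R == (size P).+1 & all (fun x => 0 < x <= k) R].

Lemma all_pairs_wf k l pr : pr \in all_pairs k l -> pair_wf k pr.1 pr.2.
Proof.
rewrite mem_filter => /andP[hs /allpairsP[[P R] [/= hP hR pr_eq]]]; subst pr.
have sP := subseq_of_subsets hP; have sR := subseq_of_subsets hR.
rewrite /pair_wf hs (subseq_uniq sP) ?(subseq_uniq sR) ?iota_uniq //=.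
by apply/allP => x /(mem_subseq sR); rewrite mem_iota; lia.
Qed.

Lemma singleton_in_sorted_pairs k l x :
  0 < x <= k -> ([::], [:: x]) \in sorted_pairs k l.
Proof.
move=> hx; rewrite mem_sort mem_filter /=.
apply: (allpairs_f (fun P R => (P, R))); first exact: nil_in_subsets.
by apply: seq1_in_subsets; rewrite mem_iota; lia.
Qed.

Lemma pair_at_wf k l i : 0 < i <= Npairs k l ->
  pair_wf k (pairP k l i) (pairR k l i).
Proof.
move=> hi; apply: (all_pairs_wf (l := l)).
rewrite -(mem_sort pair_le).
by apply: mem_nth; case: i hi.
Qed.

Lemma pair_le_trans : transitive pair_le.
Proof. by move=> b a c; apply: lexle_trans. Qed.

Lemma pair_le_refl : reflexive pair_le.
Proof. by move=> a; apply: lexle_refl. Qed.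

Lemma sorted_pairs_sorted k l : sorted pair_le (sorted_pairs k l).
Proof. by apply: sort_sorted => a b; apply: lexle_total. Qed.

Section ExtremePairs.
Variables k l : nat.
Hypothesis k_gt1 : 1 < k.

Lemma Npairs_gt1 : 1 < Npairs k l.
Proof.
have h1 := @singleton_in_sorted_pairs k l 1 ltac:(lia).
have hk := @singleton_in_sorted_pairs k l k ltac:(lia).
rewrite /Npairs; case: (sorted_pairs k l) h1 hk => [|a [|b s]] //.
by rewrite !inE => /eqP <- /eqP [k_eq1]; lia.
Qed.

Lemma pairP_first : pairP k l 1 = [::].
Proof.
have /and4P[_ _ /eqP sR /allP hR] :=
  @pair_at_wf k l 1 ltac:(by have := Npairs_gt1; lia).
have := sorted_nth0_le ([::], [::]) pair_le_trans pair_le_refl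
  (sorted_pairs_sorted k l) (@singleton_in_sorted_pairs k l 1 ltac:(lia)).
move: sR hR; rewrite /pairP /pairR /pair_le.
case: (nth _ _ 0) => P [|r R] //= sR /(_ r (mem_head _ _)) r_pos.
case/orP=> [|/andP[/eqP [] r1]]; first by rewrite ltz_nat; lia.
by case: P sR => [|p P] //; case: R.
Qed.

Lemma pairR_last_head : nth 0 (pairR k l (Npairs k l)) 0 = k.
Proof.
have /and4P[_ _ /eqP sR /allP hR] :=
  @pair_at_wf k l (Npairs k l) ltac:(by have := Npairs_gt1; lia).
have := sorted_le_nth_last ([::], [::]) pair_le_trans pair_le_refl
  (sorted_pairs_sorted k l) (@singleton_in_sorted_pairs k l k ltac:(lia)).
move: sR hR; rewrite /pairR /pair_le.
case: (nth _ _ _) => P [|r R] //= sR /(_ r (mem_head _ _)) r_le.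
by case/orP=> [|/andP[/eqP [] ->]] //; rewrite ltz_nat; lia.
Qed.

End ExtremePairs.

Definition reachable Q S (M : twoDFA Q S) (w : seq S) (c : Q * nat) : Prop :=
  exists n, run M w n = Some c.

Lemma reachable_step Q S (M : twoDFA Q S) w c c' :
  reachable M w c -> step M w c = Some c' -> reachable M w c'.
Proof. by case=> n hn hs; exists n.+1; rewrite /= hn. Qed.

Lemma tape_at_iota n pos : 0 < pos <= n ->
  tape_at (iota 1 n) pos = Some (Sym pos).
Proof.
move=> hp; rewrite /tape_at size_iota.
have -> : (pos == 0) = false by apply/eqP; lia.
have -> : (pos == n.+1) = false by apply/eqP; lia.
have -> : pos <= n by lia.
rewrite drop_iota (_ : n - pos.-1 = (n - pos).+1); last by lia.
by rewrite /= add1n prednK //; lia.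
Qed.

Section RunOfA.
Variables k l : nat.
Local Notation N := (Npairs k l).
Local Notation w := (iota 1 N.-1).
Local Notation P i := (pairP k l i).
Local Notation R i := (pairR k l i).

Lemma step_A_bounce i j : 0 < i <= N.-1 -> j < size (P i) ->
  step (A k l) w ((true, nth 0 (R i) j), i) =
  Some ((false, nth 0 (P i) j), i.-1).
Proof.
case: i => [//|i] /= hi hj.
have /and4P[_ uR /eqP sR _] : pair_wf k (P i.+1) (R i.+1).
  by apply: pair_at_wf; lia.
have hjR : j < size (R i.+1) by rewrite sR ltnW.
by rewrite /step tape_at_iota // /= /deltaA hi mem_nth // index_uniq // hj.
Qed.

Lemma step_A_return i j : 0 < i <= N.-1 -> j < size (P i.+1) ->
  step (A k l) w ((false, nth 0 (P i.+1) j), i) =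
  Some ((true, nth 0 (R i.+1) j.+1), i.+1).
Proof.
move=> hi hj; have /and4P[uP _ _ _] : pair_wf k (P i.+1) (R i.+1).
  by apply: pair_at_wf; lia.
by rewrite /step tape_at_iota // /= /deltaA hi mem_nth // index_uniq.
Qed.

Lemma step_A_advance i : 0 < i <= N.-1 ->
  step (A k l) w ((true, nth 0 (R i) (size (P i))), i) =
  Some ((true, nth 0 (R i.+1) 0), i.+1).
Proof.
move=> hi; have /and4P[_ uR /eqP sR _] : pair_wf k (P i) (R i).
  by apply: pair_at_wf; lia.
rewrite /step tape_at_iota // /= /deltaA hi mem_nth ?sR //.
by rewrite index_uniq ?sR // ltnn.
Qed.

Hypothesis k_gt1 : 1 < k.

Lemma reachable_pair_states i j : 0 < i <= N.-1 -> j <= size (P i) ->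
  reachable (A k l) w ((true, nth 0 (R i) 0), i) ->
  reachable (A k l) w ((true, nth 0 (R i) j), i).
Proof.
move=> hi; elim: j => [//|j IH] hjP start.
have i_gt1 : 1 < i.
  by case: i hi hjP {IH start} => [|[|i]] //; rewrite pairP_first.
case: i i_gt1 hi hjP IH start => [//|i] i_gt1 hi hjP IH start.
apply: reachable_step (step_A_return _ hjP); last by lia.
exact: reachable_step (IH (ltnW hjP) start) (step_A_bounce hi hjP).
Qed.

Lemma reachable_pair_start i : 0 < i <= N ->
  reachable (A k l) w ((true, nth 0 (R i) 0), i).
Proof.
elim: i => [//|[|i] IH] hi; first by exists 1.
have hi' : 0 < i.+1 <= N.-1 by lia.
apply: reachable_step (step_A_advance hi').
exact: reachable_pair_states hi' (leqnn _) (IH ltac:(lia)).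
Qed.

End RunOfA.

Theorem mainTheorem4 (k l : nat) (hk : (2 <= k)%N) :
  accepts (A k l) (iota 1 (Npairs k l).-1).
Proof.
have N_gt1 := Npairs_gt1 l hk.
have [n hn] := @reachable_pair_start k l hk (Npairs k l) ltac:(lia).
exists n, (true, k); split; last by rewrite /= eqxx.
by rewrite hn pairR_last_head // size_iota prednK // ltnW.
Qed.
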